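(* Let $\alpha>0$ and $G:=\delta_{\bar B(0,\alpha)}$ on $\mathbb{R}^n$, the indicator function of the closed Euclidean ball of radius $\alpha$ centred at $0$. Let $(x^*,q^* )\in\operatorname{graph}\partial G$. Define $\gamma:=\|q^*\|/(2\alpha)$ if $q^*\neq0$; if $q^*=0$, let $\gamma\ge0$ be arbitrary. Then for all $x\in\bar B(0,\alpha)$ and all $q\in\partial G(x)$, \[ \inf_{\bar x\in(\partial G)^{-1}(q^* )}\langle q-q^*,x-\bar x\rangle\ge\gamma\operatorname{dist}^2(x,(\partial G)^{-1}(q^* )), \] i.e. $\partial G$ is $(I,\gamma I)$-strongly submonotone at $(x^*,q^* )$ with neighbourhood $\operatorname{dom}G=\bar B(0,\alpha)$.
   Context: $\partial G$ is the convex subdifferential (normal cone of the ball); $(\partial G)^{-1}(q^* )=\{x:q^*\in\partial G(x)\}$; $\operatorname{dist}(x,A)=\inf_{a\in A}\|x-a\|$. *)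

From HB Require Import structures.
From mathcomp Require Import all_boot all_order all_algebra.
From mathcomp Require Import all_classical all_reals.
From mathcomp Require Import ereal.
Set Implicit Arguments. Unset Strict Implicit. Unset Printing Implicit Defensive.
Import Order.TTheory GRing.Theory Num.Theory.
Local Open Scope ring_scope.
Local Open Scope classical_set_scope.

Definition dotv (R : realType) (n : nat) (u v : 'rV[R]_n) : R :=
  \sum_(i < n) u 0 i * v 0 i.

Definition enorm (R : realType) (n : nat) (u : 'rV[R]_n) : R :=
  Num.sqrt (dotv u u).

Definition edist (R : realType) (n : nat) (x : 'rV[R]_n) (A : set 'rV[R]_n) : R :=
  inf [set enorm (x - a) | a in A].

Definition ball_indicator (R : realType) (n : nat) (alpha : R) (x : 'rV[R]_n) : \bar R :=
  if enorm x <= alpha then 0%E else +oo%E.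

Definition subdiff (R : realType) (n : nat) (f : 'rV[R]_n -> \bar R)
  (x q : 'rV[R]_n) : Prop :=
  f x \is a fin_num /\ forall y, (f x + (dotv q (y - x))%:E <= f y)%E.

(* The subdifferential of the indicator of the ball is its normal cone: q is a subgradient
   at x iff |x| <= alpha and <q, y - x> <= 0 for all y in the ball.  For q* <> 0 the only
   point with normal q* is u = (alpha / |q*|) q* on the sphere, so the infimum has a single
   term.  There <q, x - u> >= 0, while |x| <= |u| gives
   |x - u|^2 <= 2 <u, u - x> = (2 alpha / |q*|) <q*, u - x>, which is the bound with
   gamma = |q*| / (2 alpha).  For q* = 0 the point x itself has normal q*, so the distance
   vanishes and monotonicity of the subdifferential suffices. *)
From HB Require Import structures.
From mathcomp Require Import all_boot all_order all_algebra.
From mathcomp Require Import all_classical all_reals.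
From mathcomp Require Import ereal.
From mathcomp Require Import ring lra.
Set Implicit Arguments. Unset Strict Implicit.
Import Order.TTheory GRing.Theory Num.Theory.
Local Open Scope ring_scope.
Local Open Scope classical_set_scope.

Section EuclideanGeometry.
Variables (R : realType) (n : nat).
Implicit Types (u v w x : 'rV[R]_n) (c : R).

Lemma dotvC u v : dotv u v = dotv v u.
Proof. by apply: eq_bigr => i _; rewrite mulrC. Qed.

Lemma dotvDl u w v : dotv (u + w) v = dotv u v + dotv w v.
Proof. by rewrite /dotv -big_split; apply: eq_bigr => i _; rewrite !mxE mulrDl. Qed.

Lemma dotvNl u v : dotv (- u) v = - dotv u v.
Proof. by rewrite /dotv -sumrN; apply: eq_bigr => i _; rewrite !mxE mulNr. Qed.

Lemma dotvZl c u v : dotv (c *: u) v = c * dotv u v.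
Proof. by rewrite /dotv mulr_sumr; apply: eq_bigr => i _; rewrite !mxE mulrA. Qed.

Lemma dotvBl u w v : dotv (u - w) v = dotv u v - dotv w v.
Proof. by rewrite dotvDl dotvNl. Qed.

Lemma dotvBr v u w : dotv v (u - w) = dotv v u - dotv v w.
Proof. by rewrite dotvC dotvBl !(dotvC v). Qed.

Lemma dotvZr c v u : dotv v (c *: u) = c * dotv v u.
Proof. by rewrite dotvC dotvZl (dotvC v). Qed.

Lemma dotv0l v : dotv 0 v = 0.
Proof. by rewrite /dotv big1 // => i _; rewrite mxE mul0r. Qed.

Lemma dotv_ge0 u : 0 <= dotv u u.
Proof. by apply: sumr_ge0 => i _; rewrite -expr2 sqr_ge0. Qed.

Lemma enorm_ge0 u : 0 <= enorm u.
Proof. exact: sqrtr_ge0. Qed.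

Lemma enorm_sqr u : enorm u ^+ 2 = dotv u u.
Proof. by rewrite sqr_sqrtr // dotv_ge0. Qed.

Lemma enorm0 : enorm (0 : 'rV[R]_n) = 0.
Proof. by rewrite /enorm dotv0l sqrtr0. Qed.

Lemma enorm_sqr_le0 u : enorm u ^+ 2 <= 0 -> u = 0.
Proof.
rewrite enorm_sqr => u_le0.
have : dotv u u == 0 by rewrite eq_le u_le0 dotv_ge0.
rewrite /dotv psumr_eq0 => [/allP u0|i _]; last by rewrite -expr2 sqr_ge0.
apply/rowP => i; rewrite mxE.
by have /= := u0 i (mem_index_enum _); rewrite mulf_eq0 orbb => /eqP.
Qed.

Lemma enorm_gt0 u : u != 0 -> 0 < enorm u.
Proof.
move=> u_neq0; rewrite lt_neqAle enorm_ge0 andbT eq_sym.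
apply: contra u_neq0 => /eqP u0; apply/eqP/enorm_sqr_le0.
by rewrite u0 expr0n.
Qed.

Lemma enormZ c u : enorm (c *: u) = `|c| * enorm u.
Proof.
by rewrite /enorm dotvZl dotvZr mulrA -expr2 sqrtrM ?sqr_ge0 // sqrtr_sqr.
Qed.

Lemma enorm_sub_sqr_le x u : enorm x <= enorm u ->
  enorm (x - u) ^+ 2 <= 2 * dotv u (u - x).
Proof.
move=> xu; have x2u2 : enorm x ^+ 2 <= enorm u ^+ 2.
  by rewrite ler_pXn2r // nnegrE enorm_ge0.
move: x2u2; rewrite !enorm_sqr !dotvBl !dotvBr (dotvC x u); lra.
Qed.

Lemma edist_ge0 x (A : set 'rV[R]_n) a : A a -> 0 <= edist x A.
Proof.
move=> Aa; apply: lb_le_inf; first by exists (enorm (x - a)), a.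
by move=> _ [b _ <-]; exact: enorm_ge0.
Qed.

Lemma edist_le x (A : set 'rV[R]_n) a : A a -> edist x A <= enorm (x - a).
Proof.
move=> Aa; apply: ge_inf; last by exists a.
by exists 0 => _ [b _ <-]; exact: enorm_ge0.
Qed.

Lemma edist_mem x (A : set 'rV[R]_n) : A x -> edist x A = 0.
Proof.
move=> Ax; apply/eqP; rewrite eq_le (edist_ge0 _ Ax) andbT.
by rewrite -enorm0 -(subrr x) edist_le.
Qed.

End EuclideanGeometry.

Section Subdifferential.
Variables (R : realType) (n : nat).
Implicit Types (x y q p : 'rV[R]_n) (a : R).

Lemma subdiff_monotone (f : 'rV[R]_n -> \bar R) x q y p :
  subdiff f x q -> subdiff f y p -> 0 <= dotv (q - p) (x - y).
Proof.
move=> [+ fxq] [+ fyp]; have := fxq y; have := fyp x.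
case: (f x) => [r| |] //; case: (f y) => [s| |] // fx fy _ _.
by move: fx fy; rewrite -!EFinD !lee_fin !dotvBl !dotvBr; lra.
Qed.

Lemma subdiff_ball_indicatorP a x q :
  subdiff (ball_indicator a) x q <->
  enorm x <= a /\ forall y, enorm y <= a -> dotv q (y - x) <= 0.
Proof.
rewrite /subdiff /ball_indicator; split.
  case: ifP => [xB [_ qN] | _ []//]; split=> // y yB.
  by have := qN y; rewrite yB add0e lee_fin.
case=> -> qN; split=> // y; rewrite add0e.
by case: ifP => [/qN|_]; rewrite ?lee_fin ?leey.
Qed.

Lemma subdiff_ball_indicator0 a x :
  enorm x <= a -> subdiff (ball_indicator a) x 0.
Proof.
by move=> xB; apply/subdiff_ball_indicatorP; split=> // y _; rewrite dotv0l.
Qed.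

Lemma subdiff_ball_indicator_inv a x q : 0 < a -> q != 0 ->
  subdiff (ball_indicator a) x q -> x = (a / enorm q) *: q.
Proof.
move=> a_gt0 q_neq0 /subdiff_ball_indicatorP[xB qN].
have q_gt0 := enorm_gt0 q_neq0.
set c := a / enorm q; set u := c *: q.
have c_ge0 : 0 <= c by rewrite divr_ge0 // ltW.
have uS : enorm u = a by rewrite enormZ ger0_norm // divfK // gt_eqF.
have uq : dotv u (u - x) = c * dotv q (u - x) by rewrite dotvZl.
have := enorm_sub_sqr_le (x := x) (u := u); rewrite uS uq => /(_ xB) xu.
have := qN u; rewrite uS lexx => /(_ isT) qux.
apply/eqP; rewrite -subr_eq0; apply/eqP/enorm_sqr_le0.
by apply: (le_trans xu); rewrite pmulr_rle0 // mulr_ge0_le0.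
Qed.

Lemma subdiff_ball_indicator_submonotone a x q xb qs : 0 < a -> qs != 0 ->
  subdiff (ball_indicator a) x q -> subdiff (ball_indicator a) xb qs ->
  enorm qs / (2 * a) * enorm (x - xb) ^+ 2 <= dotv (q - qs) (x - xb).
Proof.
move=> a_gt0 qs_neq0 /subdiff_ball_indicatorP[xB qN] xbqs.
have /subdiff_ball_indicatorP[xbB _] := xbqs.
have q_xb : 0 <= dotv q (x - xb) by move: (qN xb xbB); rewrite !dotvBr; lra.
have xbE := subdiff_ball_indicator_inv a_gt0 qs_neq0 xbqs.
have qs_gt0 := enorm_gt0 qs_neq0.
set k := enorm qs / a.
have k_ge0 : 0 <= k by rewrite divr_ge0 // ltW.
have qsE : qs = k *: xb.
  rewrite xbE scalerA -[LHS]scale1r; congr (_ *: _).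
  by rewrite /k mulrA divfK ?gt_eqF // divff // gt_eqF.
have xbS : enorm xb = a.
  by rewrite xbE enormZ ger0_norm ?divr_ge0 ?ltW // divfK // gt_eqF.
have := enorm_sub_sqr_le (x := x) (u := xb).
rewrite xbS => /(_ xB) xxb.
have -> : enorm qs / (2 * a) = k / 2 by rewrite /k invfM mulrA mulrAC.
have qs_xb : dotv qs (x - xb) = - (k * dotv xb (xb - x)).
  by rewrite qsE dotvZl !dotvBr; ring.
by rewrite dotvBl qs_xb; nra.
Qed.

End Subdifferential.

Theorem lemma5p10 (R : realType) (n : nat) (alpha : R) (xs qs : 'rV[R]_n)
  (gamma : R) :
  0 < alpha ->
  subdiff (ball_indicator alpha) xs qs ->
  (qs != 0 -> gamma = enorm qs / (2 * alpha)) ->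
  (qs = 0 -> 0 <= gamma) ->
  forall (x q : 'rV[R]_n), enorm x <= alpha ->
    subdiff (ball_indicator alpha) x q ->
    (ereal_inf [set (dotv (q - qs) (x - xb))%:E
                | xb in [set xb | subdiff (ball_indicator alpha) xb qs]]
     >= (gamma * (edist x [set xb | subdiff (ball_indicator alpha) xb qs]) ^+ 2)%:E)%E.
Proof.
move=> alpha_gt0 _ gammaE _ x q xB qx.
set S := [set xb | subdiff (ball_indicator alpha) xb qs].
apply: le_ereal_inf_tmp => _ [xb Sxb <-]; rewrite lee_fin.
have [qs0 | qs_neq0] := eqVneq qs 0.
  have Sx : S x by rewrite /S /= qs0; exact: subdiff_ball_indicator0.
  by rewrite edist_mem // expr0n mulr0; exact: subdiff_monotone qx Sxb.
rewrite gammaE //; apply: le_trans (subdiff_ball_indicator_submonotone _ _ qx Sxb) => //.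
apply: ler_wpM2l; first by rewrite divr_ge0 ?mulr_ge0 ?enorm_ge0 ?ltW.
by rewrite ler_pXn2r ?nnegrE ?(edist_ge0 _ Sxb) ?enorm_ge0 ?edist_le.
Qed.
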